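(* Let $n\geq 3$, let $H$ be a $1$-dimensional linear subspace of $\mathbb{R}^n$, and let $O(n)_H=\{\psi\in O(n): \psi x=x \text{ for all } x\in H\}$ be its pointwise stabilizer in $O(n)$. Let $\phi\in O(n)$ be such that $\phi H\neq H$. If $E\subset S^{n-1}$ is nonempty, closed, and satisfies $\phi E=E$ and $\psi E=E$ for every $\psi\in O(n)_H$, then $E=S^{n-1}$.
   Context: $S^{n-1}$ is the unit sphere in $\mathbb{R}^n$ and $O(n)$ the orthogonal group. *)

(* Vectors of R^n are row vectors 'rV[R]_n,
   a matrix acts on the right: x |-> x *m A. *)
From HB Require Import structures.
From mathcomp Require Import all_boot all_order all_algebra.
From mathcomp Require Import all_classical all_reals all_analysis.
Set Implicit Arguments. Unset Strict Implicit. Unset Printing Implicit Defensive.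
Import Order.TTheory GRing.Theory Num.Theory.
Import numFieldNormedType.Exports.
Local Open Scope ring_scope.
Local Open Scope classical_set_scope.

Definition dotv {R : realType} {n : nat} (x y : 'rV[R]_n) : R :=
  \sum_(i < n) x ord0 i * y ord0 i.

Definition sphere (R : realType) (n : nat) : set 'rV[R]_n :=
  [set x | dotv x x = 1].

Definition orthogonal_mx {R : realType} {n : nat} (Q : 'M[R]_n) : Prop :=
  Q *m Q^T = 1%:M.

Definition subspace_of {R : realType} {m n : nat} (H : 'M[R]_(m, n)) : set 'rV[R]_n :=
  [set x | (x <= H)%MS].

Definition mx_image {R : realType} {n : nat} (A : 'M[R]_n) (E : set 'rV[R]_n) : set 'rV[R]_n :=
  [set x *m A | x in E].

(* Invariance of E under the pointwise stabilizer of a unit vector h makes E,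
   via Householder reflections, a union of the "latitudes" {x in S : <x,h> = a}
   of S^{n-1}. The same holds for g = h phi, whose stabilizer is the conjugate
   of that of h. Write g = c h + s u with u orthogonal to h and s > 0, and (as
   n >= 3) pick a unit w orthogonal to h and u. Travelling along a g-latitude
   from the h-latitude a reaches every h-latitude a' in [-1, 1] with
   c^2 (a' - a)^2 <= s^2 (1 - a'^2), a relative neighbourhood of a. The set of
   h-latitudes contained in E is therefore nonempty, relatively open and (E
   being closed) closed in [-1, 1], hence all of it. *)

From HB Require Import structures.
From mathcomp Require Import all_boot all_order all_algebra.
From mathcomp Require Import all_classical all_reals all_analysis.
From mathcomp Require Import ring lra zify.
Import Order.TTheory GRing.Theory Num.Theory.
Import numFieldNormedType.Exports.
Local Open Scope ring_scope.
Local Open Scope classical_set_scope.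

Section InnerProduct.
Context {R : realType} {n : nat}.
Implicit Types (x y z : 'rV[R]_n) (A : 'M[R]_n).

Lemma dotvE x y : dotv x y = (x *m y^T) 0 0.
Proof. by rewrite /dotv mxE; apply: eq_bigr => i _; rewrite mxE. Qed.

Lemma dotvC x y : dotv x y = dotv y x.
Proof. by apply: eq_bigr => i _; rewrite mulrC. Qed.

Lemma dotvDl x y z : dotv (x + y) z = dotv x z + dotv y z.
Proof. by rewrite /dotv -big_split; apply: eq_bigr => i _; rewrite mxE mulrDl. Qed.

Lemma dotvZl k x z : dotv (k *: x) z = k * dotv x z.
Proof. by rewrite /dotv mulr_sumr; apply: eq_bigr => i _; rewrite mxE mulrA. Qed.

Lemma dotvBl x y z : dotv (x - y) z = dotv x z - dotv y z.
Proof. by rewrite dotvDl -scaleN1r dotvZl mulN1r. Qed.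

Lemma dotvDr x y z : dotv z (x + y) = dotv z x + dotv z y.
Proof. by rewrite ![dotv z _]dotvC dotvDl. Qed.

Lemma dotvZr k x z : dotv z (k *: x) = k * dotv z x.
Proof. by rewrite ![dotv z _]dotvC dotvZl. Qed.

Lemma dotvBr x y z : dotv z (x - y) = dotv z x - dotv z y.
Proof. by rewrite ![dotv z _]dotvC dotvBl. Qed.

Lemma dotv_mulmxl x y A : dotv (x *m A) y = dotv x (y *m A^T).
Proof. by rewrite !dotvE trmx_mul trmxK mulmxA. Qed.

Lemma dotv_ge0 x : 0 <= dotv x x.
Proof. by apply: sumr_ge0 => i _; rewrite -expr2 sqr_ge0. Qed.

Lemma dotv_eq0 x : (dotv x x == 0) = (x == 0).
Proof.
apply/eqP/eqP => [x0|->]; last by rewrite /dotv big1 // => i _; rewrite mxE mul0r.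
apply/rowP => i; rewrite mxE; apply/eqP; rewrite -sqrf_eq0 expr2; apply/eqP.
by move: x0 => /psumr_eq0P; apply => // j _; rewrite -expr2 sqr_ge0.
Qed.

Lemma dotv_gt0 x : (0 < dotv x x) = (x != 0).
Proof. by rewrite lt_def dotv_ge0 andbT dotv_eq0. Qed.

Lemma mulmx_trmx_row x y : x *m y^T *m y = dotv x y *: y.
Proof. by rewrite [x *m y^T]mx11_scalar mul_scalar_mx dotvE. Qed.

(* Cauchy-Schwarz: expand [0 <= |x - <x,z> z|^2]. *)
Lemma dotv_unit_sqr_le1 {x z} :
  dotv x x = 1 -> dotv z z = 1 -> dotv x z ^+ 2 <= 1.
Proof.
move=> xx zz; have := dotv_ge0 (x - dotv x z *: z).
by rewrite !dotvBl !dotvBr !dotvZl !dotvZr xx zz (dotvC z x); lra.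
Qed.

Lemma dotv_unit_sqr_eq1 {x z} :
  dotv x x = 1 -> dotv z z = 1 -> dotv x z ^+ 2 = 1 -> x = dotv x z *: z.
Proof.
move=> xx zz xz; apply/eqP; rewrite -subr_eq0 -dotv_eq0.
rewrite !dotvBl !dotvBr !dotvZl !dotvZr xx zz (dotvC z x).
by rewrite mulr1 -expr2 xz !subrr.
Qed.

Definition normalize x : 'rV[R]_n := (Num.sqrt (dotv x x))^-1 *: x.

Lemma dotv_normalize {x} : x != 0 -> dotv (normalize x) (normalize x) = 1.
Proof.
rewrite -dotv_gt0 => x0; rewrite dotvZl dotvZr mulrA -expr2 exprVn.
by rewrite sqr_sqrtr ?mulVf ?lt0r_neq0 // ltW.
Qed.

Lemma normalizeK x : x = Num.sqrt (dotv x x) *: normalize x.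
Proof.
have [->|x0] := eqVneq x 0; first by rewrite /normalize !scaler0.
by rewrite scalerA divff ?scale1r // sqrtr_eq0 -ltNge dotv_gt0.
Qed.

End InnerProduct.

Section Orthogonal.
Context {R : realType} {n : nat}.
Implicit Types (x y v : 'rV[R]_n) (A B : 'M[R]_n) (E : set 'rV[R]_n).

Lemma orthogonal_mx_trmxK A : orthogonal_mx A -> A^T *m A = 1%:M.
Proof. exact: mulmx1C. Qed.

Lemma orthogonal_mx_trmx A : orthogonal_mx A -> orthogonal_mx A^T.
Proof. by move=> oA; rewrite /orthogonal_mx trmxK orthogonal_mx_trmxK. Qed.

Lemma orthogonal_mxM A B :
  orthogonal_mx A -> orthogonal_mx B -> orthogonal_mx (A *m B).
Proof.
rewrite /orthogonal_mx => oA oB.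
by rewrite trmx_mul mulmxA -(mulmxA A) oB mulmx1 oA.
Qed.

Definition householder v : 'M[R]_n := 1%:M - (2 / dotv v v) *: (v^T *m v).

Lemma householderE x v :
  x *m householder v = x - (2 * dotv x v / dotv v v) *: v.
Proof.
by rewrite mulmxBr mulmx1 -scalemxAr mulmxA mulmx_trmx_row scalerA mulrAC.
Qed.

Lemma householder_fix x v : dotv x v = 0 -> x *m householder v = x.
Proof. by move=> xv; rewrite householderE xv mulr0 mul0r scale0r subr0. Qed.

Lemma householder_orthogonal v : orthogonal_mx (householder v).
Proof.
have [->|v0] := eqVneq v 0.
  by rewrite /orthogonal_mx /householder trmx0 mul0mx scaler0 subr0 trmx1 mulmx1.
have vv : dotv v v != 0 by rewrite dotv_eq0.
rewrite /orthogonal_mx; have -> : (householder v)^T = householder v.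
  by rewrite /householder linearB /= linearZ /= trmx1 trmx_mul trmxK.
apply/row_matrixP => i; rewrite !rowE mulmxA !householderE mulmx1.
rewrite dotvBl dotvZl -addrA -opprD -scalerDl.
set k := (X in X *: v); suff -> : k = 0 by rewrite scale0r subr0.
by rewrite /k; field.
Qed.

Lemma householder_swap {x y} :
  dotv x x = dotv y y -> x *m householder (x - y) = y.
Proof.
move=> xy; have [<-|neq] := eqVneq x y; first by rewrite householder_fix // dotvBr subrr.
have vv : dotv (x - y) (x - y) = 2 * dotv x (x - y).
  by rewrite !dotvBl !dotvBr (dotvC y x) xy; ring.
rewrite householderE vv divff; first by rewrite scale1r opprB addrC subrK.
by rewrite -vv dotv_eq0 subr_eq0.
Qed.

Definition stabilizer_invariant E v :=
  forall psi, orthogonal_mx psi -> v *m psi = v -> forall x, E x -> E (x *m psi).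

Lemma stabilizer_invariant_transitive {E v x y} :
  stabilizer_invariant E v -> E x ->
  dotv x x = dotv y y -> dotv x v = dotv y v -> E y.
Proof.
move=> Einv Ex xy xvy; rewrite -(householder_swap xy).
apply: Einv Ex; first exact: householder_orthogonal.
by apply: householder_fix; rewrite dotvC dotvBl xvy subrr.
Qed.

Lemma stabilizer_invariantZ E v k :
  k != 0 -> stabilizer_invariant E v -> stabilizer_invariant E (k *: v).
Proof.
move=> k0 Einv psi opsi; rewrite -scalemxAl => /(congr1 ( *:%R k^-1)).
by rewrite !scalerA mulVf // !scale1r; apply: Einv.
Qed.

Lemma stabilizer_invariant_sphere {E v x y} :
  E `<=` @sphere R n -> stabilizer_invariant E v -> E x -> @sphere R n y ->
  dotv x v = dotv y v -> E y.
Proof.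
move=> ES Einv Ex Sy; apply: (stabilizer_invariant_transitive Einv Ex).
by rewrite (ES _ Ex) Sy.
Qed.

Lemma stabilizer_invariant_normalize {E v} :
  stabilizer_invariant E v -> stabilizer_invariant E (normalize v).
Proof.
have [->|v0] := eqVneq v 0; first by rewrite /normalize scaler0.
by apply: stabilizer_invariantZ; rewrite invr_eq0 sqrtr_eq0 -ltNge dotv_gt0.
Qed.

(* [psi] fixes [v *m phi] iff its conjugate [phi psi phi^T] fixes [v]. *)
Lemma stabilizer_invariant_mulmx E v phi :
  orthogonal_mx phi -> mx_image phi E = E ->
  stabilizer_invariant E v -> stabilizer_invariant E (v *m phi).
Proof.
move=> ophi phiE Einv psi opsi vpsi x Ex.
have phiT_E z : E z -> E (z *m phi^T).
  by rewrite -{1}phiE => -[y Ey <-]; rewrite -mulmxA ophi mulmx1.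
have -> : x *m psi = x *m phi^T *m (phi *m psi *m phi^T) *m phi.
  by rewrite !mulmxA -(mulmxA x) orthogonal_mx_trmxK // mulmx1 -!mulmxA
    orthogonal_mx_trmxK // mulmx1.
rewrite -phiE; exists (x *m phi^T *m (phi *m psi *m phi^T)) => //.
apply: Einv (phiT_E _ Ex).
  by apply: orthogonal_mxM; [exact: orthogonal_mxM | exact: orthogonal_mx_trmx].
by rewrite !mulmxA vpsi -mulmxA ophi mulmx1.
Qed.

End Orthogonal.

Lemma exists_unit_orthogonal2 {R : realType} {n : nat} (h u : 'rV[R]_n) :
  (3 <= n)%N -> exists w, [/\ dotv w w = 1, dotv w h = 0 & dotv w u = 0].
Proof.
move=> n3; set A := (col_mx h u)^T.
have : kermx A != 0.
  by rewrite -mxrank_eq0 mxrank_ker; have := rank_leq_col A; lia.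
case/rowV0Pn => w0 /sub_kermxP; rewrite /A tr_col_mx mul_mx_row => /eqP.
rewrite row_mx_eq0 => /andP[/eqP w0h /eqP w0u] w00.
have dotv0 z : w0 *m z^T = 0 -> dotv w0 z = 0 by rewrite dotvE => ->; rewrite mxE.
exists (normalize w0); split; first exact: dotv_normalize.
  by rewrite /normalize dotvZl (dotv0 h) // mulr0.
by rewrite /normalize dotvZl (dotv0 u) // mulr0.
Qed.

Lemma sqr_le1 {R : realDomainType} (x : R) : (x ^+ 2 <= 1) = (-1 <= x <= 1).
Proof. by apply/idP/andP => [x2 | [? ?]]; [split | ]; nra. Qed.

Lemma latitude_step_nbhs {R : realFieldType} (c s a : R) :
  0 < s -> c ^+ 2 + s ^+ 2 = 1 -> -1 <= a <= 1 ->
  exists2 d, 0 < d & forall a', -1 <= a' <= 1 -> `|a' - a| < d ->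
    c ^+ 2 * (a' - a) ^+ 2 <= s ^+ 2 * (1 - a' ^+ 2).
Proof.
move=> s0 cs /andP[la ua]; have -> : c ^+ 2 = 1 - s ^+ 2 by lra.
have : 0 < s ^+ 2 <= 1 by rewrite exprn_gt0 //= -cs lerDr sqr_ge0.
move: (s ^+ 2) => t /andP[t0 t1] {cs}.
(* At the poles the admissible [a'] form a one-sided interval of length [2 t]. *)
have [-> | a1] := eqVneq a 1.
  exists (2 * t) => [|a' /andP[_ ua']]; first lra.
  rewrite ltr_distlC => /andP[_ h2].
  have : 0 <= (1 - a') * (a' - 1 + 2 * t) by apply: mulr_ge0; lra.
  nra.
have [-> | a2] := eqVneq a (-1).
  exists (2 * t) => [|a' /andP[la' _]]; first lra.
  rewrite ltr_distlC => /andP[h1 _].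
  have : 0 <= (1 + a') * (2 * t - 1 - a') by apply: mulr_ge0; lra.
  nra.
have la1 : -1 < a by rewrite lt_def a2 la.
have ua1 : a < 1 by rewrite lt_def eq_sym a1 ua.
set m := t * (1 - a ^+ 2).
have m0 : 0 < m.
  apply: mulr_gt0 => //; have : 0 < (1 - a) * (1 + a) by apply: mulr_gt0; lra.
  nra.
have m1 : m <= 1.
  by rewrite -[1]mul1r ler_pM ?gerBl ?sqr_ge0 //; [lra | nra].
exists (m / 3) => [|a' _]; first exact: divr_gt0.
have [e ->] : exists e, a' = a + e by exists (a' - a); rewrite addrC subrK.
rewrite addrAC subrr add0r ltr_norml => /andP[h1 h2].
have ee : e ^+ 2 <= m / 3 by nra.
have ae : 2 * a * t * e <= 2 * (m / 3).
  have at1 : -1 <= a * t <= 1 by apply/andP; split; nra.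
  nra.
rewrite /m in ee ae; nra.
Qed.

Section TwoAxes.
Context {R : realType} {n : nat} {h u w : 'rV[R]_n}.

Definition frame_point (a b : R) : 'rV[R]_n :=
  a *: h + b *: u + Num.sqrt (1 - a ^+ 2 - b ^+ 2) *: w.

Lemma continuous_frame_point0 : continuous (frame_point^~ 0).
Proof.
move=> a; apply: cvgD; first apply: cvgD.
- exact: scalel_continuous.
- exact: cvg_cst.
apply: cvgZr_tmp; apply: continuous_comp; last exact: sqrt_continuous.
apply: cvgB; last exact: cvg_cst.
by apply: cvgB; [exact: cvg_cst | apply: cvgM; exact: cvg_id].
Qed.

Hypotheses (hh : dotv h h = 1) (uu : dotv u u = 1) (ww : dotv w w = 1).
Hypotheses (uh : dotv u h = 0) (wh : dotv w h = 0) (wu : dotv w u = 0).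

Lemma frame_pointP a b : a ^+ 2 + b ^+ 2 <= 1 ->
  [/\ @sphere R n (frame_point a b), dotv (frame_point a b) h = a
    & dotv (frame_point a b) u = b].
Proof.
move=> ab; rewrite /sphere /frame_point /=; set r := Num.sqrt _.
have r2 : r * r = 1 - a ^+ 2 - b ^+ 2 by rewrite -expr2 sqr_sqrtr //; lra.
rewrite !dotvDl !dotvDr !dotvZl !dotvZr hh uu ww uh wh wu.
rewrite (dotvC h u) (dotvC h w) (dotvC u w) uh wh wu.
by split; [nra | ring | ring].
Qed.

Lemma frame_point0P {a} : -1 <= a <= 1 ->
  [/\ @sphere R n (frame_point a 0), dotv (frame_point a 0) h = a
    & dotv (frame_point a 0) u = 0].
Proof.
move=> ha; apply: frame_pointP.
by rewrite expr0n addr0 sqr_le1.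
Qed.

Context {E : set 'rV[R]_n} {c s : R}.
Hypotheses (s_gt0 : 0 < s) (cs1 : c ^+ 2 + s ^+ 2 = 1).
Hypotheses (E_sphere : E `<=` @sphere R n) (E_h : stabilizer_invariant E h)
  (E_g : stabilizer_invariant E (c *: h + s *: u)).

(* [frame_point a' b'] with [b' = c (a - a') / s] has the same coordinate
   along the axis [c h + s u] as [frame_point a 0]. *)
Lemma latitude_step (a a' : R) : -1 <= a <= 1 -> -1 <= a' <= 1 ->
  c ^+ 2 * (a' - a) ^+ 2 <= s ^+ 2 * (1 - a' ^+ 2) ->
  E (frame_point a 0) -> E (frame_point a' 0).
Proof.
move=> ha ha' step Ea; set b' := c * (a - a') / s.
have b'1 : a' ^+ 2 + b' ^+ 2 <= 1.
  rewrite -(ler_pM2r (exprn_gt0 2 s_gt0)) mul1r mulrDl.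
  have : b' ^+ 2 * s ^+ 2 = c ^+ 2 * (a' - a) ^+ 2.
    by rewrite /b'; field; rewrite gt_eqF.
  nra.
have [Sa ah au] := frame_point0P ha.
have [Sb bh bu] := frame_pointP a' b' b'1.
have [Sa' a'h _] := frame_point0P ha'.
have Eb : E (frame_point a' b').
  apply: stabilizer_invariant_sphere E_sphere E_g Ea Sb _.
  by rewrite !dotvDr !dotvZr ah au bh bu /b'; field; rewrite gt_eqF.
by apply: stabilizer_invariant_sphere E_sphere E_h Eb Sa' _; rewrite bh a'h.
Qed.

Lemma frame_point0_in_closed_invariant : E !=set0 -> closed E ->
  forall a, -1 <= a <= 1 -> E (frame_point a 0).
Proof.
move=> [x0 Ex0] clE.
set B := `[-1, 1] `&` (frame_point^~ 0) @^-1` E.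
suff BT : B = `[-1, 1] by move=> a ha; have [] : B a by rewrite BT /= in_itv.
apply: segment_connected.
- have x0h : -1 <= dotv x0 h <= 1.
    by rewrite -sqr_le1 dotv_unit_sqr_le1 //; exact: E_sphere.
  exists (dotv x0 h); split; first by rewrite /= in_itv.
  have [S0 S0h _] := frame_point0P x0h.
  by apply: stabilizer_invariant_sphere E_sphere E_h Ex0 S0 _; rewrite S0h.
- exists [set a | -1 <= a <= 1 -> E (frame_point a 0)]°; first exact: open_interior.
  apply/seteqP; split => a [ha Ea]; split => //; last first.
    by apply: (nbhs_singleton Ea); move: ha; rewrite /= in_itv.
  move: ha; rewrite /= in_itv => ha.
  have [d d0 hd] := latitude_step_nbhs _ _ _ s_gt0 cs1 ha.
  apply/nbhs_ballP; exists d => // a'; rewrite -ball_normE /= distrC => aa' ha'.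
  exact: latitude_step ha ha' (hd a' ha' aa') Ea.
- exists ((frame_point^~ 0) @^-1` E) => //.
  by apply: preimage_closed => // a _; exact: continuous_frame_point0.
Qed.

Lemma closed_invariant_eq_sphere : E !=set0 -> closed E -> E = @sphere R n.
Proof.
move=> E0 clE; apply/seteqP; split => // y Sy.
have yh : -1 <= dotv y h <= 1 by rewrite -sqr_le1 dotv_unit_sqr_le1.
have [Sa ah _] := frame_point0P yh.
apply: stabilizer_invariant_sphere E_sphere E_h _ Sy ah.
exact: frame_point0_in_closed_invariant.
Qed.

End TwoAxes.

Lemma closed_two_axes_invariant_eq_sphere {R : realType} {n : nat}
    {E : set 'rV[R]_n} {h g : 'rV[R]_n} :
  (3 <= n)%N -> dotv h h = 1 -> dotv g g = 1 -> dotv h g ^+ 2 < 1 ->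
  E `<=` @sphere R n -> stabilizer_invariant E h -> stabilizer_invariant E g ->
  E !=set0 -> closed E -> E = @sphere R n.
Proof.
move=> n3 hh gg hg1 ES Eh Eg E0 clE.
set c := dotv h g; set r := g - c *: h.
have rh : dotv r h = 0 by rewrite dotvBl dotvZl hh mulr1 dotvC subrr.
have rr : dotv r r = 1 - c ^+ 2.
  by rewrite !dotvBl !dotvBr !dotvZl !dotvZr hh gg (dotvC g h) -/c; ring.
have r0 : r != 0 by rewrite -dotv_gt0 rr subr_gt0.
have [w [ww wh wr]] := exists_unit_orthogonal2 h (normalize r) n3.
have uh : dotv (normalize r) h = 0 by rewrite dotvZl rh mulr0.
have s0 : 0 < Num.sqrt (dotv r r) by rewrite sqrtr_gt0 dotv_gt0.
have cs : c ^+ 2 + Num.sqrt (dotv r r) ^+ 2 = 1.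
  by rewrite sqr_sqrtr ?dotv_ge0 // rr subrKC.
have gE : g = c *: h + Num.sqrt (dotv r r) *: normalize r.
  by rewrite -normalizeK /r addrC subrK.
rewrite gE in Eg.
exact: (closed_invariant_eq_sphere hh (dotv_normalize r0) ww uh wh wr s0 cs
  ES Eh Eg E0 clE).
Qed.

Lemma mx_image_subspace_of_eigen {R : realType} {m n : nat} (H : 'M[R]_(m, n))
    (A : 'M[R]_n) c :
  c != 0 -> H *m A = c *: H -> mx_image A (subspace_of H) = subspace_of H.
Proof.
move=> c0 HA; apply/seteqP; split => [_ [x /submxP[D ->] <-] | y /submxP[D ->]].
  by rewrite /subspace_of /= -mulmxA HA -scalemxAr scalemx_sub ?submxMl.
exists (c^-1 *: (D *m H)); first by rewrite /subspace_of /= scalemx_sub ?submxMl.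
by rewrite -scalemxAl -mulmxA HA -scalemxAr scalerA mulVf ?scale1r.
Qed.

Lemma normalize_mulmx_sqr_dotv_lt1 {R : realType} {n : nat} (H : 'rV[R]_n)
    (phi : 'M[R]_n) :
  H != 0 -> orthogonal_mx phi ->
  mx_image phi (subspace_of H) <> subspace_of H ->
  dotv (normalize H) (normalize H *m phi) ^+ 2 < 1.
Proof.
move=> H0 ophi phiH; set h := normalize H.
have hh : dotv h h = 1 := dotv_normalize H0.
have gg : dotv (h *m phi) (h *m phi) = 1.
  by rewrite dotv_mulmxl -mulmxA ophi mulmx1.
rewrite lt_neqAle (dotv_unit_sqr_le1 hh gg) andbT.
apply: contra_notN phiH => /eqP c2; set c := dotv h (h *m phi) in c2.
have c0 : c != 0 by rewrite -sqrf_eq0 c2 oner_eq0.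
have hphi : h *m phi = c *: h.
  by rewrite /c dotvC; apply: dotv_unit_sqr_eq1; rewrite // dotvC.
apply: (mx_image_subspace_of_eigen _ _ _ c0).
by rewrite (normalizeK H) -/h -scalemxAl hphi scalerA [RHS]scalerA mulrC.
Qed.

Theorem lemma3p1 (R : realType) (n : nat) (H : 'M[R]_(1, n))
    (phi : 'M[R]_n) (E : set 'rV[R]_n) :
  (3 <= n)%N ->
  \rank H = 1%N ->
  orthogonal_mx phi ->
  mx_image phi (subspace_of H) <> subspace_of H ->
  E `<=` @sphere R n ->
  E !=set0 ->
  closed E ->
  mx_image phi E = E ->
  (forall psi : 'M[R]_n, orthogonal_mx psi ->
     (forall x, subspace_of H x -> x *m psi = x) -> mx_image psi E = E) ->
  E = @sphere R n.
Proof.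
move=> n3 rH ophi phiH ES E0 clE phiE Hinv.
have H0 : H != 0 by rewrite -mxrank_eq0 rH.
have EH : stabilizer_invariant E H.
  move=> psi opsi Hpsi x Ex; rewrite -(Hinv psi opsi); first by exists x.
  by move=> _ /submxP[D ->]; rewrite -mulmxA Hpsi.
have Eh := stabilizer_invariant_normalize EH.
apply: (closed_two_axes_invariant_eq_sphere (g := normalize H *m phi) n3 _ _ _
  ES Eh _ E0 clE).
- exact: dotv_normalize.
- by rewrite dotv_mulmxl -mulmxA ophi mulmx1 dotv_normalize.
- exact: normalize_mulmx_sqr_dotv_lt1.
- exact: stabilizer_invariant_mulmx.
Qed.
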